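(* Let $(\Omega,\mathcal{F},\mathbb{P})$ be a probability space and $\mathcal{X}\subseteq\mathbb{L}^0$. Then either $\mathcal{X}$ fails to be uniformly $\mathbb{Q}$-integrable for every probability $\mathbb{Q}\ll\mathbb{P}$, or there exists a probability $\mathbb{Q}_{\mathcal{X}}\ll\mathbb{P}$ such that (i) $\mathcal{X}$ is uniformly $\mathbb{Q}_{\mathcal{X}}$-integrable, and (ii) whenever a probability $\mathbb{Q}\ll\mathbb{P}$ is singular to $\mathbb{Q}_{\mathcal{X}}$, $\mathcal{X}$ fails to be uniformly $\mathbb{Q}$-integrable.
   Context: $\mathbb{L}^0$ is the space of (equivalence classes modulo $\mathbb{P}$-null sets of) real-valued random variables. For a probability $\mathbb{Q}\ll\mathbb{P}$, $\mathcal{X}\subseteq\mathbb{L}^0$ is uniformly $\mathbb{Q}$-integrable if $\lim_{n\to\infty}\sup_{X\in\mathcal{X}}\mathbb{E}_{\mathbb{Q}}[|X|\mathbb{I}_{\{|X|>n\}}]=0$. *)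

From HB Require Import structures.
From mathcomp Require Import all_boot all_order all_algebra.
From mathcomp Require Import all_classical all_reals all_analysis.
Set Implicit Arguments. Unset Strict Implicit. Unset Printing Implicit Defensive.
Import Order.TTheory GRing.Theory Num.Theory.
Local Open Scope classical_set_scope.
Local Open Scope ring_scope.

Definition unif_integrable d (T : measurableType d) (R : realType)
  (Q : set T -> \bar R) (X : set (T -> R)) : Prop :=
  (fun n : nat =>
     ereal_sup [set (\int[Q]_(w in [set w | ((n%:R : R) < `|f w|)%R]) (`|f w|)%R%:E)%E
               | f in X]) @ \oo --> (0%:E : \bar R).

Definition mutually_singular d (T : measurableType d) (R : realType)
  (Q1 Q2 : set T -> \bar R) : Prop :=
  exists A : set T, [/\ measurable A, Q1 A = 0%E & Q2 (~` A) = 0%E].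

From HB Require Import structures.
From mathcomp Require Import all_boot all_order all_algebra.
From mathcomp Require Import all_classical all_reals all_analysis.
From mathcomp Require Import measurable_realfun lra.
Import Order.TTheory GRing.Theory Num.Theory.
Local Open Scope classical_set_scope.
Local Open Scope ring_scope.

(* A countable mixture sum_k w_k Q_k of probabilities Q_k << P under which X
   is uniformly integrable is again such a probability, provided the weights
   make sum_k w_k sup_(f in X) E_(Q_k)|f| finite (dominated convergence for
   series), and every Q_k is absolutely continuous w.r.t. it.  Measure the
   "size" of such a Q by P(B) for a minimal carrier B of Q (a Q-full set of
   least P-measure).  A mixture Q_X of a sequence whose carriers approach the
   supremum of these sizes has a carrier B_X of maximal size.  If Q << P were
   such a probability singular to Q_X, a carrier of the mixture of Q and Q_X
   would split along the separating set into carriers of Q and of Q_X, hence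
   have size at least P(carrier of Q) + P(B_X) > P(B_X). *)

Record positive_weights (R : realType) := PositiveWeights {
  weight :> nat -> R;
  weight_gt0 : forall k, (0 < weight k)%R;
  weight_sum1 : (\sum_(k <oo) (weight k)%:E = 1)%E }.
Arguments weight_gt0 {R}.
Arguments weight_sum1 {R}.

Section nneseries_lemmas.
Context {R : realType}.
Local Open Scope ereal_scope.

Lemma nneseries_ge_term (u : (\bar R)^nat) k : (forall i, 0 <= u i) ->
  u k <= \sum_(i <oo) u i.
Proof.
move=> u0; rewrite (@nneseriesD1 _ _ k xpredT) //.
by rewrite leeDl //; apply: nneseries_ge0 => i _ _.
Qed.

Lemma nneseries_half_pow : \sum_(k <oo) ((2 ^ (k + 1))%:R^-1 : R)%:E = 1.
Proof.
have /(cvg_lim (@ereal_hausdorff R)) := @cvg_geometric_eseries_half R 1 0.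
rewrite expr0 divr1 => <-.
by apply: congr_lim; apply/funext => n; apply: eq_bigr => k _; rewrite div1r.
Qed.

Lemma nneseries_dominated_cvg0 (u : nat -> (\bar R)^nat) (g : (\bar R)^nat) :
  (forall n k, 0 <= u n k) -> (forall k, u n k @[n --> \oo] --> 0) ->
  (forall n k, u n k <= g k) -> \sum_(k <oo) g k < +oo ->
  \sum_(k <oo) u n k @[n --> \oo] --> 0.
Proof.
move=> u0 u_cvg ug g_fin.
have g0 k : 0 <= g k by exact: le_trans (u0 0%N k) (ug 0%N k).
under eq_cvg do rewrite -ge0_integral_count //.
have := @dominated_cvg _ _ _ counting setT measurableT u (cst 0) g.
rewrite integral0; apply => //.
- by move=> k _; exact: u_cvg.
- move=> k _; rewrite ge0_fin_numE ?g0 //.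
  by apply: le_lt_trans g_fin; exact: nneseries_ge_term.
- apply/integrableP; split => //.
  by under eq_integral do rewrite gee0_abs //; rewrite ge0_integral_count.
- by move=> n k _; rewrite gee0_abs.
Qed.

Lemma exists_weights_summable (M : nat -> R) : (forall k, (0 <= M k)%R) ->
  exists w : positive_weights R, \sum_(k <oo) (w k * M k)%:E < +oo.
Proof.
move=> M0; have M1 k : (0 < 1 + M k)%R by have := M0 k; lra.
(* dividing by 1 + M k makes c k * M k <= 2^-(k+1) summable *)
pose c k := ((2 ^ (k + 1))%:R^-1 / (1 + M k))%R.
have c_gt0 k : (0 < c k)%R by rewrite divr_gt0 // invr_gt0 ltr0n expn_gt0.
have cM k : (c k * (1 + M k) = (2 ^ (k + 1))%:R^-1)%R by rewrite divfK ?gt_eqF.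
have c_le k : (c k <= (2 ^ (k + 1))%:R^-1)%R.
  by rewrite -cM ler_peMr ?(ltW (c_gt0 k)) // lerDl.
pose S := \sum_(k <oo) (c k)%:E.
have S_gt0 : 0 < S.
  apply: (@lt_le_trans _ _ (c 0%N)%:E); first by rewrite lte_fin.
  by apply: nneseries_ge_term => k; rewrite lee_fin ltW.
have S_le1 : S <= 1.
  rewrite -nneseries_half_pow; apply: lee_nneseries => [k _ _|k _].
    by rewrite lee_fin ltW.
  by rewrite lee_fin c_le.
have S_fin : S \is a fin_num.
  by rewrite ge0_fin_numE ?(ltW S_gt0) ?(le_lt_trans S_le1) ?ltry.
pose s := fine S; have Ss : S = s%:E by rewrite /s fineK.
have s_gt0 : (0 < s)%R by rewrite -lte_fin -Ss.
have w_gt0 k : (0 < c k / s)%R by rewrite divr_gt0.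
have w_sum1 : \sum_(k <oo) (c k / s)%:E = 1.
  under eq_eseriesr do rewrite EFinM muleC.
  rewrite nneseriesZl => [|k _]; last by rewrite lee_fin ltW.
  by rewrite -/S Ss -EFinM mulVf ?gt_eqF.
exists (@PositiveWeights _ (fun k => c k / s)%R w_gt0 w_sum1) => /=.
apply: (@le_lt_trans _ _ (\sum_(k <oo) (s^-1 * (2 ^ (k + 1))%:R^-1)%:E)).
  apply: lee_nneseries => [k _ _|k _].
    by rewrite lee_fin mulr_ge0 // ltW.
  have := c_gt0 k; have := M0 k; have : (0 < s^-1)%R by rewrite invr_gt0.
  by rewrite lee_fin -cM; nra.
under eq_eseriesr do rewrite EFinM.
rewrite nneseriesZl => [|k _]; last by rewrite lee_fin.
by rewrite nneseries_half_pow mule1 ltry.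
Qed.

End nneseries_lemmas.

Section mixture.
Context {d} {T : measurableType d} {R : realType}.
Local Open Scope ereal_scope.
Variables (Q_ : nat -> probability T R) (w : positive_weights R).

Definition mixture :=
  mseries (fun k => mscale (NngNum (ltW (weight_gt0 w k))) (Q_ k)) 0.

HB.instance Definition _ := Measure.on mixture.

Lemma mixtureE A : mixture A = \sum_(k <oo) (w k)%:E * Q_ k A.
Proof. by []. Qed.

Let mixture_setT : mixture setT = 1.
Proof.
rewrite mixtureE -(weight_sum1 w); apply: eq_eseriesr => k _.
by rewrite probability_setT mule1.
Qed.

HB.instance Definition _ :=
  Measure_isProbability.Build _ _ _ mixture mixture_setT.

Lemma mixture_dominates (P : {measure set T -> \bar R}) :
  (forall k, Q_ k `<< P) -> mixture `<< P.
Proof.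
move=> QP; apply/null_content_dominatesP => A mA PA0.
rewrite mixtureE; apply: eseries0 => k _ _.
by have /null_content_dominatesP -> := QP k; rewrite ?mule0.
Qed.

Lemma dominates_mixture k : Q_ k `<< mixture.
Proof.
apply/null_content_dominatesP => A mA mixA0; apply/eqP.
rewrite eq_le measure_ge0 andbT.
rewrite -(@lee_pmul2l _ (w k)%:E) ?lte_fin ?weight_gt0 // mule0.
rewrite -mixA0 /= mixtureE; apply: nneseries_ge_term => i.
by rewrite mule_ge0 // lee_fin ltW ?weight_gt0.
Qed.

End mixture.

Section minimal_carrier.
Context {d} {T : measurableType d} {R : realType}.
Local Open Scope ereal_scope.

Definition minimal_carrier (P Q : set T -> \bar R) (B : set T) :=
  [/\ measurable B, Q (~` B) = 0 &
      forall B', measurable B' -> Q (~` B') = 0 -> P B <= P B'].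

Lemma exists_minimal_carrier (P Q : probability T R) :
  exists B, minimal_carrier P Q B.
Proof.
pose S := [set P B | B in [set B | measurable B /\ Q (~` B) = 0]].
have S_ne : S != set0.
  by apply/set0P; exists (P setT), setT => //; split; rewrite ?setCT ?measure0.
have [u Su u_cvg] := ereal_inf_seq S_ne.
have /choice[B /all_and2[/all_and2[mB QB] PB]] :
    forall i, exists B, (measurable B /\ Q (~` B) = 0) /\ P B = u i.
  by move=> i; have [B ? ?] := Su i; exists B.
have mcapB : measurable (\bigcap_i B i) by exact: bigcapT_measurable.
exists (\bigcap_i B i); split => //.
- rewrite setC_bigcap; apply/eqP; rewrite eq_le measure_ge0 andbT.
  have mBC i : measurable (~` B i) by exact: measurableC.
  apply: le_trans
    (measure_sigma_subadditive Q mBC (bigcupT_measurable _ mBC) _) _.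
    exact: subset_refl.
  by rewrite eseries0 // => i _ _; exact: QB.
- move=> B' mB' QB'; apply: (@le_trans _ _ (ereal_inf S)).
    rewrite -(cvg_lim _ u_cvg) //; apply: lime_ge; first exact: cvgP u_cvg.
    by apply: nearW => i; rewrite -PB le_measure ?inE // => x; apply.
  by apply: ereal_inf_lbound; exists B'.
Qed.

Lemma minimal_carrier_le (P Q : set T -> \bar R)
    (Q' : {measure set T -> \bar R}) B B' : Q `<< Q' -> minimal_carrier P Q B -> minimal_carrier P Q' B' ->
  P B <= P B'.
Proof.
move=> /null_content_dominatesP QQ' [_ _ minB] [mB' Q'B' _].
by apply: minB => //; apply: QQ' => //; apply: measurableC.
Qed.

Lemma minimal_carrier_gt0 (P : {measure set T -> \bar R})
    (Q : probability T R) B :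
  Q `<< P -> minimal_carrier P Q B -> 0 < P B.
Proof.
move=> /null_content_dominatesP QP [mB QB _]; rewrite lt0e measure_ge0 andbT.
apply/negP => /eqP PB0; have QB0 : Q B = 0 := QP B mB PB0.
have : Q (B `|` ~` B) = 0 by apply: null_set_setU => //; exact: measurableC.
by rewrite setUv probability_setT => /eqP; rewrite onee_eq0.
Qed.

End minimal_carrier.

Section tail_integrals.
Context {d} {T : measurableType d} {R : realType} (X : set (T -> R)).
Hypothesis mX : forall f, X f -> measurable_fun setT f.
Local Open Scope ereal_scope.

Definition tail_set (f : T -> R) (n : nat) := [set w | (n%:R < `|f w|)%R].

Definition tail_integral (mu : set T -> \bar R) f n :=
  \int[mu]_(w in tail_set f n) (`|f w|%R)%:E.

Definition tail_sup (mu : set T -> \bar R) n :=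
  ereal_sup [set tail_integral mu f n | f in X].

Lemma unif_integrableE mu : unif_integrable mu X <-> tail_sup mu @ \oo --> 0.
Proof. by []. Qed.

Lemma measurable_EFin_abs f : X f ->
  measurable_fun setT (fun w => (`|f w|%R)%:E : \bar R).
Proof.
by move=> Xf; apply/measurable_EFinP; apply: measurableT_comp => //; exact: mX.
Qed.

Lemma measurable_tail_set f n : X f -> measurable (tail_set f n).
Proof.
move=> Xf; have /measurable_EFinP := measurable_EFin_abs f Xf.
move=> /(_ measurableT _ (measurable_itv `]n%:R, +oo[)).
rewrite setTI; congr measurable; apply/seteqP; split => w /=;
  by rewrite in_itv /= andbT.
Qed.

Lemma tail_integral_ge0 (mu : {measure set T -> \bar R}) f n :
  0 <= tail_integral mu f n.
Proof. by apply: integral_ge0 => w _; rewrite lee_fin. Qed.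

Lemma tail_integral_le_sup mu f n : X f ->
  tail_integral mu f n <= tail_sup mu n.
Proof. by move=> Xf; apply: ereal_sup_ubound; exists f. Qed.

Lemma tail_sup_ge0 (mu : {measure set T -> \bar R}) n : X !=set0 ->
  0 <= tail_sup mu n.
Proof.
move=> [f Xf]; apply: le_trans (tail_integral_le_sup mu f n Xf).
exact: tail_integral_ge0.
Qed.

Lemma unif_integrable_nonempty mu : unif_integrable mu X -> X !=set0.
Proof.
move=> /unif_integrableE UI; apply/set0P/negP => /eqP X0.
have : tail_sup mu = cst -oo.
  by apply/funext => n; rewrite /tail_sup X0 image_set0 ereal_sup0.
move=> tailE; move: UI; rewrite tailE => /(cvg_lim (@ereal_hausdorff R)).
by rewrite lim_cst.
Qed.

Lemma tail_integral_le_integral (mu : {measure set T -> \bar R}) f n : X f ->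
  tail_integral mu f n <= \int[mu]_w (`|f w|%R)%:E.
Proof.
move=> Xf; apply: ge0_subset_integral => //.
- exact: measurable_tail_set.
- exact: measurable_EFin_abs.
Qed.

Lemma integral_le_tail_integral (Q : probability T R) f n : X f ->
  \int[Q]_w (`|f w|%R)%:E <= tail_integral Q f n + n%:R%:E.
Proof.
move=> Xf; have mtail := measurable_tail_set f n Xf.
have mtailC := measurableC mtail; have mf := measurable_EFin_abs f Xf.
rewrite -(setUv (tail_set f n)) ge0_integral_setU //; last 2 first.
- by rewrite setUv.
- exact/disj_setPCl.
rewrite leeD2l //.
apply: (@le_trans _ _ (\int[Q]_(w in ~` tail_set f n) n%:R%:E)).
  apply: ge0_le_integral => //; first exact: measurable_funS mf.
  by move=> w; rewrite /tail_set /= => /negP; rewrite -leNgt lee_fin.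
rewrite integral_cst // -[leRHS]mule1 lee_wpmul2l ?lee_fin //.
exact: probability_le1.
Qed.

Lemma unif_integrable_tail_sup_bounded (Q : probability T R) :
  unif_integrable Q X ->
  exists M : R, (0 <= M)%R /\ forall n, tail_sup Q n <= M%:E.
Proof.
move=> /unif_integrableE /fine_cvgP [tail_fin tail_cvg].
have tail_lt1 : \forall n \near \oo, (fine (tail_sup Q n) < 1)%R.
  exact: cvgr_lt tail_cvg _ ltr01.
have [N _ /(_ N (leqnn N)) [supN_fin supN_lt1]] := filterI tail_fin tail_lt1.
exists (1 + N%:R)%R; split; first by rewrite addr_ge0.
move=> n; apply: ge_ereal_sup => _ [f Xf <-].
apply: le_trans (tail_integral_le_integral Q f n Xf) _.
apply: le_trans (integral_le_tail_integral Q f N Xf) _.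
rewrite EFinD leeD2r // (le_trans (tail_integral_le_sup Q f N Xf)) //.
by rewrite -(fineK supN_fin) lee_fin ltW.
Qed.

Lemma tail_integral_mixture (Q_ : nat -> probability T R)
    (w : positive_weights R) f n : X f ->
  tail_integral (mixture Q_ w) f n =
  \sum_(k <oo) (w k)%:E * tail_integral (Q_ k) f n.
Proof.
move=> Xf; have mtail := measurable_tail_set f n Xf.
have mf := measurable_funS measurableT (subsetT _) (measurable_EFin_abs f Xf).
rewrite /tail_integral ge0_integral_measure_series //.
by apply: eq_eseriesr => k _; rewrite ge0_integral_mscale.
Qed.

Lemma mixture_unif_integrable (Q_ : nat -> probability T R)
    (w : positive_weights R) (M : nat -> R) :
  (forall k, unif_integrable (Q_ k) X) ->
  (forall k n, tail_sup (Q_ k) n <= (M k)%:E) ->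
  \sum_(k <oo) (w k * M k)%:E < +oo -> unif_integrable (mixture Q_ w) X.
Proof.
move=> QU QM wM_fin; have X0 := unif_integrable_nonempty _ (QU 0%N).
have w0 k : 0 <= (w k)%:E by rewrite lee_fin ltW ?weight_gt0.
pose u n k := (w k)%:E * tail_sup (Q_ k) n.
apply/unif_integrableE.
apply: (@squeeze_cvge _ _ _ _ (cst 0) _ (fun n => \sum_(k <oo) u n k)).
- apply: nearW => n; rewrite tail_sup_ge0 //=.
  apply: ge_ereal_sup => _ [f Xf <-]; rewrite tail_integral_mixture //.
  apply: lee_nneseries => [k _ _|k _].
    by rewrite mule_ge0 ?tail_integral_ge0.
  by rewrite lee_wpmul2l ?tail_integral_le_sup.
- exact: cvg_cst.
- apply: (@nneseries_dominated_cvg0 _ _ (fun k => (w k * M k)%:E)) => //.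
  + by move=> n k; rewrite mule_ge0 ?tail_sup_ge0.
  + by move=> k; rewrite -(mule0 (w k)%:E); apply: cvgeZl => //; exact: QU.
  + by move=> n k; rewrite EFinM lee_wpmul2l.
Qed.

Lemma exists_mixture (P : {measure set T -> \bar R})
    (Q_ : nat -> probability T R) :
  (forall k, Q_ k `<< P) -> (forall k, unif_integrable (Q_ k) X) ->
  exists QX : probability T R,
    [/\ QX `<< P, unif_integrable QX X & forall k, Q_ k `<< QX].
Proof.
move=> QP QU.
have [M /all_and2[M0 QM]] :=
  choice (fun k => unif_integrable_tail_sup_bounded _ (QU k)).
have [w wM_fin] := exists_weights_summable _ M0.
exists (mixture Q_ w); split.
- exact: mixture_dominates.
- exact: mixture_unif_integrable QU QM wM_fin.
- exact: dominates_mixture.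
Qed.

Definition max_ui_carrier (P : set T -> \bar R) (BX : set T) :=
  forall (Q : probability T R) B, Q `<< P -> unif_integrable Q X ->
    minimal_carrier P Q B -> P B <= P BX.

Lemma exists_max_ui_carrier (P : probability T R) :
  (exists Q : probability T R, Q `<< P /\ unif_integrable Q X) ->
  exists (QX : probability T R) (BX : set T),
    [/\ QX `<< P, unif_integrable QX X, minimal_carrier P QX BX &
         max_ui_carrier P BX].
Proof.
move=> [Q0 [Q0P Q0U]].
pose S := [set P B | B in [set B | exists Q : probability T R,
  [/\ Q `<< P, unif_integrable Q X & minimal_carrier P Q B]]].
have [B0 B0min] := exists_minimal_carrier P Q0.
have S_ne : S != set0 by apply/set0P; exists (P B0), B0 => //; exists Q0.
have [u Su u_cvg] := ereal_sup_seq S_ne.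
have /choice[QB /all_and4[QP QU Bmin PB]] : forall i,
    exists QB : probability T R * set T,
      [/\ QB.1 `<< P, unif_integrable QB.1 X, minimal_carrier P QB.1 QB.2 &
          P QB.2 = u i].
  by move=> i; have [B [Q [QP QU Bmin]] PB] := Su i; exists (Q, B).
(* the mixture dominates every (QB i).1, so its carrier beats every (QB i).2 *)
have [QX [QXP QXU QXdom]] := exists_mixture P (fun i => (QB i).1) QP QU.
have [BX BXmin] := exists_minimal_carrier P QX.
have supS_le : ereal_sup S <= P BX.
  rewrite -(cvg_lim _ u_cvg) //; apply: lime_le; first exact: cvgP u_cvg.
  apply: nearW => i; rewrite -PB.
  exact: minimal_carrier_le (QXdom i) (Bmin i) BXmin.
exists QX, BX; split => // Q B QP' QU' Bmin'.
apply: le_trans supS_le; apply: ereal_sup_ubound; by exists B => //; exists Q.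
Qed.

Lemma max_ui_carrier_singular_not_ui (P QX : probability T R) BX :
  QX `<< P -> unif_integrable QX X -> minimal_carrier P QX BX ->
  max_ui_carrier P BX ->
  forall Q : probability T R, Q `<< P -> mutually_singular Q QX ->
    ~ unif_integrable Q X.
Proof.
move=> QXP QXU [mBX _ minBX] BXmax Q QP [A [mA QA QXA]] QU.
have [BQ BQmin] := exists_minimal_carrier P Q.
have PBQ_gt0 := minimal_carrier_gt0 P Q BQ QP BQmin.
pose Q2 k : probability T R := if k is 0 then Q else QX.
have Q2P k : Q2 k `<< P by case: k.
have Q2U k : unif_integrable (Q2 k) X by case: k.
have [Q' [Q'P Q'U Q'dom]] := exists_mixture P Q2 Q2P Q2U.
have [B' B'min] := exists_minimal_carrier P Q'.
have [mB' Q'B' _] := B'min.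
have /null_content_dominatesP QB' := Q'dom 0%N.
have /null_content_dominatesP QXB' := Q'dom 1%N.
(* B' splits along A into a Q-full and a QX-full set *)
have : P BQ + P BX <= P B'.
  rewrite (measureDI P mB' mA) leeD //.
  - case: BQmin => _ _; apply; first exact: measurableD.
    rewrite setCD; apply: null_set_setU => //; first exact: measurableC.
    exact: QB' (measurableC mB') Q'B'.
  - apply: minBX; first exact: measurableI.
    rewrite setCI; apply: null_set_setU => //; try exact: measurableC.
    exact: QXB' (measurableC mB') Q'B'.
apply/negP; rewrite -ltNge; apply: le_lt_trans (BXmax _ _ Q'P Q'U B'min) _.
by rewrite lteDr // fin_num_measure.
Qed.

End tail_integrals.

Theorem proposition2p4 (d : measure_display) (Omega : measurableType d)
  (R : realType) (P : probability Omega R) (X : set (Omega -> R))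
  (hX : forall f, X f -> measurable_fun setT f) :
  (forall Q : probability Omega R, Q `<< P -> ~ unif_integrable Q X) \/
  (exists QX : probability Omega R,
     [/\ QX `<< P, unif_integrable QX X &
         forall Q : probability Omega R, Q `<< P ->
           mutually_singular Q QX -> ~ unif_integrable Q X]).
Proof.
have [UI_ex|no_UI] := pselect (exists Q : probability Omega R,
  Q `<< P /\ unif_integrable Q X); last first.
  by left => Q QP QU; apply: no_UI; exists Q.
right; have [QX [BX [QXP QXU BXmin BXmax]]] :=
  exists_max_ui_carrier _ hX P UI_ex.
exists QX; split => //.
exact: max_ui_carrier_singular_not_ui BXmin BXmax.
Qed.
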